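(* Let $F$ be a bicontinuous set functor with $F\emptyset\ne\emptyset$, with a presentation $\varepsilon\colon H_\Sigma\to F$ and chosen $p'\in\Sigma_0$. Then the terminal coalgebra $\nu F$, ordered by cutting, is a cpo which is a conservative completion of the initial algebra $\mu F$ (embedded via $m$). Moreover, ordering $F(\mu F)$ so that $\varphi$ is an order isomorphism and $F(\nu F)$ so that $\tau$ is one, $\tau$ is the unique continuous map $g\colon\nu F\to F(\nu F)$ with $g\cdot m=Fm\cdot\varphi^{-1}$.
   Context: Bicontinuous: $F$ preserves filtered colimits (finitary) and limits of $\omega^{op}$-chains. $(\mu F,\varphi)$: initial algebra; $(\nu F,\tau)$: terminal coalgebra; $m\colon\mu F\to\nu F$ the unique coalgebra homomorphism $(\mu F,\varphi^{-1})\to(\nu F,\tau)$ (injective). Presentation: finitary signature $\Sigma$, $H_\Sigma X=\coprod_n\Sigma_n\times X^n$, natural $\varepsilon\colon H_\Sigma\to F$ with surjective components. $\Sigma$-trees: ordered rooted trees labelled in $\Sigma$, a node labelled in $\Sigma_n$ having $n$ children; $\nu H_\Sigma$ = all $\Sigma$-trees with $\tau'$ inverse of tree tupling, $\mu H_\Sigma$ = finite ones. $\partial'_ns$: delete nodes of height $>n$ and relabel the nodes of height $n$ by $p'$. $h\colon\mu H_\Sigma\to\mu F$: the unique $\Sigma$-algebra homomorphism into $(\mu F,\varphi\cdot\varepsilon_{\mu F})$; $\sim$ its kernel; $s\sim^*s'$ iff $\partial'_ns\sim\partial'_ns'$ for all $n$. $\hat k\colon\nu H_\Sigma\to\nu F$: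 the unique $F$-coalgebra homomorphism $(\nu H_\Sigma,\varepsilon_{\nu H_\Sigma}\tau')\to(\nu F,\tau)$, surjective with kernel $\sim^*$. Order by cutting on $\nu F$: $x\le y$ iff $x=y$ or $x=\hat k(s)$, $y=\hat k(s')$ with $s\sim^*\partial'_ns'$ for some $n$. Continuous = monotone and preserving existing directed joins. A conservative completion of a poset $P$ is a cpo containing $P$ as a subposet closed under existing directed joins such that every continuous map from $P$ to a cpo extends uniquely to a continuous map on the completion. *)

From mathcomp Require Import all_boot.
Set Implicit Arguments.
Unset Strict Implicit.
Unset Printing Implicit Defensive.

Definition fmap_t (F : Type -> Type) := forall A B : Type, (A -> B) -> F A -> F B.

Definition IsFunctor (F : Type -> Type) (fmap : fmap_t F) : Prop :=
  (forall A (x : F A), fmap A A (fun a => a) x = x) /\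
  (forall A B C (f : A -> B) (g : B -> C) (x : F A),
      fmap A C (fun a => g (f a)) x = fmap B C g (fmap A B f x)).

Definition IsDirectedPreorder (I : Type) (le : I -> I -> Prop) : Prop :=
  (forall i, le i i) /\ (forall i j k, le i j -> le j k -> le i k) /\
  inhabited I /\ (forall i j, exists k, le i k /\ le j k).

Definition IsDiagram (I : Type) (le : I -> I -> Prop) (X : I -> Type)
  (f : forall i j, le i j -> X i -> X j) : Prop :=
  (forall i (h : le i i) x, f i i h x = x) /\
  (forall i j k (hij : le i j) (hjk : le j k) (hik : le i k) x,
      f i k hik x = f j k hjk (f i j hij x)).

Definition IsColimit (I : Type) (le : I -> I -> Prop) (X : I -> Type)
  (f : forall i j, le i j -> X i -> X j) (C : Type) (c : forall i, X i -> C) : Prop :=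
  (forall i j (h : le i j) x, c j (f i j h x) = c i x) /\
  (forall (D : Type) (d : forall i, X i -> D),
      (forall i j (h : le i j) x, d j (f i j h x) = d i x) ->
      exists u : C -> D, (forall i x, u (c i x) = d i x) /\
        (forall u' : C -> D, (forall i x, u' (c i x) = d i x) -> forall y, u' y = u y)).

(** finitary = preserves filtered (equivalently: directed) colimits *)
Definition Finitary (F : Type -> Type) (fmap : fmap_t F) : Prop :=
  forall (I : Type) (le : I -> I -> Prop) (X : I -> Type)
         (f : forall i j, le i j -> X i -> X j) (C : Type) (c : forall i, X i -> C),
    @IsDirectedPreorder I le -> @IsDiagram I le X f -> @IsColimit I le X f C c ->
    @IsColimit I le (fun i => F (X i)) (fun i j h => fmap _ _ (f i j h))
              (F C) (fun i => fmap _ _ (c i)).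

Definition IsChainLimit (X : nat -> Type) (f : forall n, X n.+1 -> X n)
  (L : Type) (l : forall n, L -> X n) : Prop :=
  (forall n x, f n (l n.+1 x) = l n x) /\
  (forall (D : Type) (d : forall n, D -> X n),
      (forall n x, f n (d n.+1 x) = d n x) ->
      exists u : D -> L, (forall n x, l n (u x) = d n x) /\
        (forall u' : D -> L, (forall n x, l n (u' x) = d n x) -> forall y, u' y = u y)).

Definition PreservesChainLimits (F : Type -> Type) (fmap : fmap_t F) : Prop :=
  forall (X : nat -> Type) (f : forall n, X n.+1 -> X n) (L : Type) (l : forall n, L -> X n),
    @IsChainLimit X f L l ->
    @IsChainLimit (fun n => F (X n)) (fun n => fmap _ _ (f n)) (F L) (fun n => fmap _ _ (l n)).

Definition Bicontinuous (F : Type -> Type) (fmap : fmap_t F) : Prop :=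
  Finitary fmap /\ PreservesChainLimits fmap.

Definition IsInitialAlgebra (F : Type -> Type) (fmap : fmap_t F) (A : Type) (a : F A -> A) : Prop :=
  forall (B : Type) (b : F B -> B),
    exists h : A -> B, (forall x, h (a x) = b (fmap _ _ h x)) /\
      (forall h' : A -> B, (forall x, h' (a x) = b (fmap _ _ h' x)) -> forall y, h' y = h y).

Definition IsTerminalCoalgebra (F : Type -> Type) (fmap : fmap_t F) (A : Type) (a : A -> F A) : Prop :=
  forall (B : Type) (b : B -> F B),
    exists h : B -> A, (forall x, a (h x) = fmap _ _ h (b x)) /\
      (forall h' : B -> A, (forall x, a (h' x) = fmap _ _ h' (b x)) -> forall y, h' y = h y).

Definition HSig (Sig : nat -> Type) (X : Type) : Type :=
  {n : nat & (Sig n * ('I_n -> X))%type}.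

Definition HSig_map (Sig : nat -> Type) (X Y : Type) (g : X -> Y) (u : HSig Sig X) : HSig Sig Y :=
  let: existT n (s, xs) := u in existT _ n (s, fun i => g (xs i)).

Definition IsPresentation (Sig : nat -> Type) (F : Type -> Type) (fmap : fmap_t F)
  (eps : forall X, HSig Sig X -> F X) : Prop :=
  (forall X Y (g : X -> Y) (u : HSig Sig X), eps Y (HSig_map g u) = fmap X Y g (eps X u)) /\
  (forall X (y : F X), exists u, eps X u = y).

(** finite Sigma-trees: mu H_Sigma *)
Inductive ftree (Sig : nat -> Type) : Type :=
  fnode : forall n, Sig n -> ('I_n -> ftree Sig) -> ftree Sig.

(** all Sigma-trees: nu H_Sigma (up to bisimilarity) *)
CoInductive ctree (Sig : nat -> Type) : Type :=
  cnode : forall n, Sig n -> ('I_n -> ctree Sig) -> ctree Sig.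

Definition ctree_out (Sig : nat -> Type) (t : ctree Sig) : HSig Sig (ctree Sig) :=
  match t with cnode n s ts => existT _ n (s, ts) end.

Fixpoint femb (Sig : nat -> Type) (t : ftree Sig) : ctree Sig :=
  match t with fnode n s ts => cnode s (fun i => femb (ts i)) end.

Lemma ord0_False (i : 'I_0) : False.
Proof. by case: i. Qed.

Definition ord0_elim (A : Type) (i : 'I_0) : A := False_rect A (ord0_False i).

Fixpoint cut (Sig : nat -> Type) (p' : Sig 0) (k : nat) (t : ctree Sig) : ftree Sig :=
  match k with
  | 0 => fnode p' (@ord0_elim (ftree Sig))
  | k'.+1 => match t with cnode n s ts => fnode s (fun i => cut p' k' (ts i)) end
  end.

(** h : mu H_Sigma -> mu F, the unique Sigma-algebra homomorphism into
    (mu F, phi . eps_{mu F}) (by structural recursion) *)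
Fixpoint hmu (Sig : nat -> Type) (F : Type -> Type) (mu : Type) (phi : F mu -> mu)
  (eps : forall X, HSig Sig X -> F X) (t : ftree Sig) : mu :=
  match t with
  | fnode n s ts => phi (eps mu (existT _ n (s, fun i => hmu phi eps (ts i))))
  end.

Definition csim (Sig : nat -> Type) (F : Type -> Type) (mu : Type) (phi : F mu -> mu)
  (eps : forall X, HSig Sig X -> F X) (p' : Sig 0) (s s' : ctree Sig) : Prop :=
  forall n, hmu phi eps (cut p' n s) = hmu phi eps (cut p' n s').

Definition cut_le (Sig : nat -> Type) (F : Type -> Type) (mu : Type) (phi : F mu -> mu)
  (eps : forall X, HSig Sig X -> F X) (p' : Sig 0) (nu : Type) (khat : ctree Sig -> nu)
  (x y : nu) : Prop :=
  x = y \/ exists (s s' : ctree Sig) (n : nat),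
      x = khat s /\ y = khat s' /\ csim phi eps p' s (femb (cut p' n s')).

Definition IsPoset (P : Type) (le : P -> P -> Prop) : Prop :=
  (forall x, le x x) /\ (forall x y z, le x y -> le y z -> le x z) /\
  (forall x y, le x y -> le y x -> x = y).

Definition Directed (P : Type) (le : P -> P -> Prop) (D : P -> Prop) : Prop :=
  (exists x, D x) /\ (forall x y, D x -> D y -> exists z, D z /\ le x z /\ le y z).

Definition IsJoin (P : Type) (le : P -> P -> Prop) (D : P -> Prop) (x : P) : Prop :=
  (forall d, D d -> le d x) /\ (forall u, (forall d, D d -> le d u) -> le x u).

Definition IsCpo (P : Type) (le : P -> P -> Prop) : Prop :=
  IsPoset le /\ (forall D, Directed le D -> exists x, IsJoin le D x).

Definition image (P Q : Type) (f : P -> Q) (D : P -> Prop) : Q -> Prop :=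
  fun y => exists d, D d /\ y = f d.

Definition Monotone (P Q : Type) (leP : P -> P -> Prop) (leQ : Q -> Q -> Prop) (f : P -> Q) : Prop :=
  forall x y, leP x y -> leQ (f x) (f y).

Definition Continuous (P Q : Type) (leP : P -> P -> Prop) (leQ : Q -> Q -> Prop) (f : P -> Q) : Prop :=
  Monotone leP leQ f /\
  (forall D x, Directed leP D -> IsJoin leP D x -> IsJoin leQ (image f D) (f x)).

Definition ConservativeCompletion (P Q : Type) (leP : P -> P -> Prop) (leQ : Q -> Q -> Prop)
  (e : P -> Q) : Prop :=
  IsCpo leQ /\
  IsPoset leP /\ (forall x y, e x = e y -> x = y) /\ (forall x y, leP x y <-> leQ (e x) (e y)) /\
  (forall D x, Directed leP D -> IsJoin leP D x -> IsJoin leQ (image e D) (e x)) /\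
  (forall (R : Type) (leR : R -> R -> Prop), IsCpo leR ->
     forall f : P -> R, Continuous leP leR f ->
       exists g : Q -> R, Continuous leQ leR g /\ (forall x, g (e x) = f x) /\
         (forall g' : Q -> R, Continuous leQ leR g' -> (forall x, g' (e x) = f x) ->
            forall y, g' y = g y)).

(** For a bicontinuous set functor [F] with initial algebra [mu] and terminal
    coalgebra [nu], let [trunc n : nu -> mu] be the truncation at depth [n]
    (unfold [n] times with [tau], place the leaf [p'] at depth [n], refold
    with [phi]) and [approx n y = m (trunc n y)].  The order by cutting is
    [x <= y  iff  x = y  or  x = approx n y  for some n].

    Section [Truncation] works from five abstract properties of [trunc]:
    [trunc 0] is constant, [trunc j (m (trunc n y)) = trunc (min j n) y], the
    truncations separate [nu], compatible sequences are realized, and every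
    element of [mu] is finite.  A directed set then either has a greatest
    element or its join is the limit of the truncations of its elements of
    unbounded depth; so [nu] is a cpo, each [y] is the join of its
    approximants (continuous maps are determined on [mu]), and continuous
    maps on [mu] extend by joining their values on truncations.

    Section [CutOrder] proves the five properties for the concrete [trunc]:
    separation and realization because [F] preserves the limit of the chain
    [mu <- mu <- ...], finiteness by induction on [mu]; and it identifies the
    order by cutting of [Sigma]-trees with the truncation order.  The theorem
    follows, [tau] being continuous as an order isomorphism. *)

From Stdlib Require Import FunctionalExtensionality PropExtensionality.
From Stdlib Require Import ProofIrrelevance IndefiniteDescription Classical.
From mathcomp Require Import all_boot.
Set Implicit Arguments.
Unset Strict Implicit.

Lemma join_unique (Q : Type) (leQ : Q -> Q -> Prop)
    (antisym : forall a b, leQ a b -> leQ b a -> a = b) (D : Q -> Prop) a b :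
  IsJoin leQ D a -> IsJoin leQ D b -> a = b.
Proof. by move=> [ubA leastA] [ubB leastB]; apply: antisym; [apply: leastA | apply: leastB]. Qed.

Lemma iso_continuous (P Q : Type) (leP : P -> P -> Prop) (f : P -> Q) (g : Q -> P) :
  (forall x, g (f x) = x) -> Continuous leP (fun u v => leP (g u) (g v)) f.
Proof.
move=> gf; split=> [x y|D x _ [ub least]]; first by rewrite !gf.
split=> [_ [d [Dd ->]]|u hu]; first by rewrite !gf; exact: ub.
rewrite gf; apply: least => d Dd.
by have := hu (f d) (ex_intro _ d (conj Dd erefl)); rewrite gf.
Qed.

Section Truncation.
(** An abstract description of [nu F] through its finite approximants:
    [trunc n y : mu] is the depth-[n] truncation of [y], and [m] embeds [mu]
    into [nu]. *)
Variables (mu nu : Type) (m : mu -> nu) (trunc : nat -> nu -> mu).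
Hypothesis trunc0 : forall y y', trunc 0 y = trunc 0 y'.
Hypothesis trunc_m_trunc : forall j n y, trunc j (m (trunc n y)) = trunc (minn j n) y.
Hypothesis trunc_sep : forall y y', (forall n, trunc n y = trunc n y') -> y = y'.
Hypothesis trunc_lim : forall a : nat -> mu, (forall n, trunc n (m (a n.+1)) = a n) ->
  exists y, forall n, trunc n y = a n.
Hypothesis trunc_fin : forall a, exists N, trunc N (m a) = a.

Definition approx n y := m (trunc n y).

Definition trunc_le x y := x = y \/ exists n, x = approx n y.

Definition fixed n y := approx n y = y.

Lemma approx_approx k n y : approx k (approx n y) = approx (minn k n) y.
Proof. by apply: trunc_sep => j; rewrite /approx !trunc_m_trunc minnA. Qed.

Lemma fixed_approx n y : fixed n (approx n y).
Proof. by rewrite /fixed approx_approx minnn. Qed.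

Lemma fixed_up n k y : n <= k -> fixed n y -> fixed k y.
Proof. by move=> le_nk fy; rewrite /fixed -fy approx_approx (minn_idPr le_nk). Qed.

Lemma approx_le k n y : k <= n -> approx k (approx n y) = approx k y.
Proof. by move=> le_kn; rewrite approx_approx (minn_idPl le_kn). Qed.

Lemma fixed_le n x y : trunc_le x y -> fixed n y -> fixed n x.
Proof. by case=> [-> //|[a ->]] fy; rewrite /fixed approx_approx -{2}fy approx_approx minnC. Qed.

Lemma trunc_le_refl x : trunc_le x x.
Proof. by left. Qed.

Lemma trunc_le_approx n y : trunc_le (approx n y) y.
Proof. by right; exists n. Qed.

Lemma trunc_le_approx_mono n k y : n <= k -> trunc_le (approx n y) (approx k y).
Proof. by move=> le_nk; right; exists n; rewrite approx_le. Qed.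

Lemma trunc_le_trans x y z : trunc_le x y -> trunc_le y z -> trunc_le x z.
Proof.
case=> [-> //|[a ->]]; case=> [-> | [b ->]]; first exact: trunc_le_approx.
by right; exists (minn a b); rewrite approx_approx.
Qed.

Lemma trunc_le_antisym x y : trunc_le x y -> trunc_le y x -> x = y.
Proof.
move=> le_xy [-> //|[b ey]].
have fy : fixed b y by rewrite ey; exact: fixed_approx.
by rewrite ey (fixed_le le_xy fy).
Qed.

Lemma trunc_le_poset : IsPoset trunc_le.
Proof. by split; [exact: trunc_le_refl | split; [exact: trunc_le_trans | exact: trunc_le_antisym]]. Qed.

Lemma trunc_le_comparable x y z : trunc_le x z -> trunc_le y z -> trunc_le x y \/ trunc_le y x.
Proof.
case=> [-> | [a ->]]; first by right.
case=> [-> | [b ->]]; first by left; exact: trunc_le_approx.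
case: (leqP a b) => [le_ab|/ltnW le_ba]; [left | right]; exact: trunc_le_approx_mono.
Qed.

Lemma unfixed_depth n b y : ~ fixed n (approx b y) -> n < b.
Proof.
move=> nf; rewrite ltnNge; apply/negP => le_bn.
exact: nf (fixed_up le_bn (fixed_approx b y)).
Qed.

Lemma trunc_le_agree n x y : trunc_le x y -> ~ fixed n x -> trunc n x = trunc n y.
Proof.
case=> [-> //|[b ->]] nfx.
by rewrite /approx trunc_m_trunc (minn_idPl (ltnW (unfixed_depth nfx))).
Qed.

Lemma strict_unfixed0 x y : trunc_le x y -> x <> y -> ~ fixed 0 y.
Proof.
move=> le_xy ne_xy fy; apply: ne_xy.
by rewrite -(fixed_le le_xy fy) -fy /approx (trunc0 x y).
Qed.

Lemma strict_unfixedS n x y : trunc_le x y -> x <> y -> ~ fixed n x -> ~ fixed n.+1 y.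
Proof.
case=> [-> //|[b ex]] ne_xy nfx fy; rewrite ex in nfx ne_xy.
exact: ne_xy (fixed_up (unfixed_depth nfx) fy).
Qed.

Lemma directed_agree (D : nu -> Prop) n d d' : Directed trunc_le D -> D d -> D d' ->
  ~ fixed n d -> ~ fixed n d' -> trunc n d = trunc n d'.
Proof.
move=> [_ dirD] Dd Dd' nfd nfd'; have [z [_ [le_dz le_d'z]]] := dirD d d' Dd Dd'.
case: (trunc_le_comparable le_dz le_d'z) => le.
  exact: trunc_le_agree.
by symmetry; exact: trunc_le_agree.
Qed.

Definition greatest (D : nu -> Prop) d := D d /\ forall y, D y -> trunc_le y d.

Definition limit_join (D : nu -> Prop) z :=
  (forall d, D d -> trunc_le d z) /\ (forall u, (forall d, D d -> trunc_le d u) -> u = z) /\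
  (forall n, exists d, D d /\ trunc n d = trunc n z).

Section NoGreatest.
(** A directed set without greatest element: its join is the limit of the
    truncations of its elements of unbounded depth. *)
Variable D : nu -> Prop.
Hypothesis dirD : Directed trunc_le D.
Hypothesis no_top : ~ exists d, greatest D d.

Lemma no_top_strict d : D d -> exists d', D d' /\ trunc_le d d' /\ d <> d'.
Proof.
move=> Dd; apply: NNPP => nstrict; apply: no_top; exists d; split=> // y Dy.
have [z [Dz [le_dz le_yz]]] := dirD.2 d y Dd Dy.
case: (classic (d = z)) => [-> //|ne_dz]; by case: nstrict; exists z.
Qed.

Lemma no_top_unfixed n : exists d, D d /\ ~ fixed n d.
Proof.
elim: n => [|n [d [Dd nfd]]].
  have [x0 Dx0] := dirD.1; have [y [Dy [le_xy ne_xy]]] := no_top_strict Dx0.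
  by exists y; split=> //; exact: strict_unfixed0 le_xy ne_xy.
have [y [Dy [le_dy ne_dy]]] := no_top_strict Dd.
by exists y; split=> //; exact: strict_unfixedS le_dy ne_dy nfd.
Qed.

(** Choosing such elements [deep n], their truncations are compatible and
    their limit [z] is the join of [D]. *)
Lemma no_top_join : exists z, limit_join D z.
Proof.
pose deep n := proj1_sig (constructive_indefinite_description _ (no_top_unfixed n)).
have deepP n : D (deep n) /\ ~ fixed n (deep n).
  exact: proj2_sig (constructive_indefinite_description _ (no_top_unfixed n)).
have deep_agree n d : D d -> ~ fixed n d -> trunc n d = trunc n (deep n).
  by move=> Dd nfd; have [Dn nfn] := deepP n; exact: directed_agree dirD Dd Dn nfd nfn.
have [z trunc_z] : exists z, forall n, trunc n z = trunc n (deep n).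
  apply: trunc_lim => n; have [Dn1 nfn1] := deepP n.+1.
  rewrite trunc_m_trunc (minn_idPl (leqnSn n)) deep_agree // => fn.
  exact: nfn1 (fixed_up (leqnSn n) fn).
exists z; split; [|split].
- move=> d Dd; have [d' [Dd' [[//|[b ed]] ne_dd']]] := no_top_strict Dd.
  right; exists b; apply: trunc_sep => j; rewrite ed /approx !trunc_m_trunc trunc_z.
  apply: deep_agree => // fd'; apply: ne_dd'; rewrite ed.
  exact: fixed_up (geq_minr j b) fd'.
- move=> u ub_u; apply: trunc_sep => n; rewrite trunc_z.
  have [Dn nfn] := deepP n; symmetry; exact: trunc_le_agree (ub_u _ Dn) nfn.
- by move=> n; exists (deep n); split; [exact: (deepP n).1 | rewrite trunc_z].
Qed.

End NoGreatest.

Lemma directed_join_cases (D : nu -> Prop) : Directed trunc_le D ->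
  (exists d, greatest D d) \/ (exists z, limit_join D z).
Proof.
move=> dirD; case: (classic (exists d, greatest D d)) => [|no_top]; first by left.
by right; exact: no_top_join.
Qed.

Lemma trunc_le_cpo : IsCpo trunc_le.
Proof.
split; first exact: trunc_le_poset.
move=> D dirD; case: (directed_join_cases dirD) => [[d [Dd top]]|[z [ub [uniq _]]]].
  by exists d; split=> // u; apply.
by exists z; split=> // u ub_u; rewrite (uniq u ub_u); exact: trunc_le_refl.
Qed.

Definition approxes y w := exists n, w = approx n y.

Lemma approxes_directed y : Directed trunc_le (approxes y).
Proof.
split; first by exists (approx 0 y), 0.
move=> _ _ [n ->] [k ->]; exists (approx (maxn n k) y); split; first by exists (maxn n k).
by split; apply: trunc_le_approx_mono; [exact: leq_maxl | exact: leq_maxr].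
Qed.

Lemma approxes_join y : IsJoin trunc_le (approxes y) y.
Proof.
split=> [_ [n ->]|u ub_u]; first exact: trunc_le_approx.
case: (directed_join_cases (approxes_directed y)) => [[_ [[N ->] top]]|[z [_ [uniq _]]]].
  suff -> : y = approx N y by apply: ub_u; exists N.
  apply: trunc_sep => j; case: (leqP j N) => [le_jN|/ltnW le_Nj].
    by rewrite /approx trunc_m_trunc (minn_idPl le_jN).
  have e : approx j y = approx N y.
    by apply: trunc_le_antisym; [apply: top; exists j | exact: trunc_le_approx_mono].
  by rewrite -e /approx trunc_m_trunc minnn.
have -> : y = z by apply: uniq => _ [n ->]; exact: trunc_le_approx.
by rewrite (uniq u ub_u); exact: trunc_le_refl.
Qed.

Lemma continuous_ext_unique (Q : Type) (leQ : Q -> Q -> Prop)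
    (antisym : forall a b, leQ a b -> leQ b a -> a = b) (g1 g2 : nu -> Q) :
  Continuous trunc_le leQ g1 -> Continuous trunc_le leQ g2 ->
  (forall a, g1 (m a) = g2 (m a)) -> forall y, g1 y = g2 y.
Proof.
move=> [_ cont1] [_ cont2] agree y.
have J1 := cont1 _ _ (approxes_directed y) (approxes_join y).
have J2 := cont2 _ _ (approxes_directed y) (approxes_join y).
suff same : image g1 (approxes y) = image g2 (approxes y).
  by rewrite same in J1; exact: (join_unique antisym J1 J2).
apply: functional_extensionality => q; apply: propositional_extensionality.
by split=> [[_ [[n ->] ->]]|[_ [[n ->] ->]]]; exists (approx n y);
  (split; [exists n | rewrite /approx agree]).
Qed.

Definition mu_le a b := trunc_le (m a) (m b).

Lemma trunc_stable a N K : trunc N (m a) = a -> N <= K -> trunc K (m a) = a.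
Proof. by move=> ha le_NK; rewrite -{1}ha trunc_m_trunc (minn_idPr le_NK) ha. Qed.

Lemma m_inj a b : m a = m b -> a = b.
Proof.
move=> e; have [N hN] := trunc_fin a; have [M hM] := trunc_fin b.
by rewrite -(trunc_stable hN (leq_maxl N M)) -(trunc_stable hM (leq_maxr N M)) e.
Qed.

Lemma mu_le_poset : IsPoset mu_le.
Proof.
split; first by move=> a; exact: trunc_le_refl.
split; first by move=> a b c; exact: trunc_le_trans.
by move=> a b le_ab le_ba; apply: m_inj; exact: trunc_le_antisym.
Qed.

Lemma image_directed (D : mu -> Prop) : Directed mu_le D -> Directed trunc_le (image m D).
Proof.
move=> [[d0 Dd0] dirD]; split; first by exists (m d0), d0.
move=> _ _ [d1 [Dd1 ->]] [d2 [Dd2 ->]]; have [d3 [Dd3 le3]] := dirD d1 d2 Dd1 Dd2.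
by exists (m d3); split; first by exists d3.
Qed.

Lemma m_join (D : mu -> Prop) x : Directed mu_le D -> IsJoin mu_le D x ->
  IsJoin trunc_le (image m D) (m x).
Proof.
move=> dirD [ub least].
case: (directed_join_cases (image_directed dirD)) => [[_ [[d0 [Dd0 ->]] top]]|[z [ubz [uniq _]]]].
  split=> [_ [d [Dd ->]]|u ub_u]; first exact: ub.
  apply: trunc_le_trans (ub_u _ (ex_intro _ d0 (conj Dd0 erefl))).
  by apply: least => d Dd; apply: top; exists d.
have -> : m x = z by apply: uniq => _ [d [Dd ->]]; exact: ub.
by split=> // u ub_u; rewrite (uniq u ub_u); exact: trunc_le_refl.
Qed.

Section Extension.
(** A continuous map [f] from [mu] into a cpo extends to [nu] by sending [y]
    to the join of the values of [f] on the truncations of [y]. *)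
Variables (R : Type) (leR : R -> R -> Prop) (f : mu -> R).
Hypothesis cpoR : IsCpo leR.
Hypothesis contf : Continuous mu_le leR f.

Definition ext_approxes y r := exists n, r = f (trunc n y).

Lemma ext_approxes_directed y : Directed leR (ext_approxes y).
Proof.
split; first by exists (f (trunc 0 y)), 0.
move=> _ _ [n ->] [k ->]; exists (f (trunc (maxn n k) y)); split; first by exists (maxn n k).
by split; apply: contf.1; apply: trunc_le_approx_mono; [exact: leq_maxl | exact: leq_maxr].
Qed.

Definition ext y : R :=
  proj1_sig (constructive_indefinite_description _ (cpoR.2 _ (ext_approxes_directed y))).

Lemma ext_join y : IsJoin leR (ext_approxes y) (ext y).
Proof. exact: proj2_sig (constructive_indefinite_description _ (cpoR.2 _ _)). Qed.

(** [ext] extends [f], since every [a : mu] is one of its own truncations. *)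
Lemma ext_m a : ext (m a) = f a.
Proof.
apply: (join_unique cpoR.1.2.2 (ext_join (m a))).
split=> [_ [n ->]|u ub_u]; first by apply: contf.1; exact: trunc_le_approx.
by have [N hN] := trunc_fin a; apply: ub_u; exists N; rewrite hN.
Qed.

(** [ext] is monotone, and preserves directed joins: in the limit case the
    join is approximated at every depth by elements of the directed set. *)
Lemma ext_mono : Monotone trunc_le leR ext.
Proof.
move=> x y [->|[n ->]]; first exact: cpoR.1.1.
by rewrite /approx ext_m; apply: (ext_join y).1; exists n.
Qed.

Lemma ext_continuous : Continuous trunc_le leR ext.
Proof.
split=> [|D x dirD [ub least]]; first exact: ext_mono.
split=> [_ [d [Dd ->]]|u ub_u]; first by apply: ext_mono; exact: ub.
case: (directed_join_cases dirD) => [[d0 [Dd0 top]]|[z [ubz [uniq deep]]]].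
  have -> : x = d0 by apply: trunc_le_antisym; [exact: least | exact: ub].
  by apply: ub_u; exists d0.
have -> : x = z := uniq x ub.
apply: (ext_join z).2 => _ [n ->]; have [d [Dd <-]] := deep n.
apply: cpoR.1.2.1 (ub_u (ext d) (ex_intro _ d (conj Dd erefl))).
by apply: (ext_join d).1; exists n.
Qed.

End Extension.

Theorem trunc_completion : ConservativeCompletion mu_le trunc_le m.
Proof.
split; first exact: trunc_le_cpo.
split; first exact: mu_le_poset.
split; first exact: m_inj.
split; first by [].
split; first exact: m_join.
move=> R leR cpoR f contf; exists (ext cpoR contf).
split; first exact: ext_continuous.
split=> [a|g cont_g g_m]; first exact: ext_m.
apply: (continuous_ext_unique cpoR.1.2.2 cont_g (ext_continuous cpoR contf)) => a.
by rewrite g_m ext_m.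
Qed.

End Truncation.

Lemma terminal_hom_unique (F : Type -> Type) (fmap : fmap_t F) (A : Type) (a : A -> F A)
    (B : Type) (b : B -> F B) (h1 h2 : B -> A) :
  IsTerminalCoalgebra fmap a ->
  (forall x, a (h1 x) = fmap _ _ h1 (b x)) -> (forall x, a (h2 x) = fmap _ _ h2 (b x)) ->
  forall x, h1 x = h2 x.
Proof.
move=> term hom1 hom2 x; have [h [_ uniq]] := term B b.
by rewrite (uniq h1 hom1) (uniq h2 hom2).
Qed.

Lemma chain_limit_ext (X : nat -> Type) (f : forall n, X n.+1 -> X n) (L : Type)
    (l : forall n, L -> X n) (D : Type) (u1 u2 : D -> L) :
  @IsChainLimit X f L l -> (forall n x, l n (u1 x) = l n (u2 x)) -> forall x, u1 x = u2 x.
Proof.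
move=> [cone univ] agree x.
have [u [_ uniq]] := univ D (fun n x => l n (u1 x)) (fun n x => cone n (u1 x)).
by rewrite (uniq u1 (fun _ _ => erefl)) (uniq u2 (fun n x => esym (agree n x))).
Qed.

Lemma initial_ind (F : Type -> Type) (fmap : fmap_t F) (A : Type) (a : F A -> A)
    (P : A -> Prop) :
  IsFunctor fmap -> IsInitialAlgebra fmap a ->
  (forall u : F {x | P x}, P (a (fmap _ _ (fun s => proj1_sig s) u))) -> forall x, P x.
Proof.
move=> [fid fcomp] init closed.
pose b (u : F {x | P x}) : {x | P x} := exist _ _ (closed u).
have [h [hom_h _]] := init _ b; have [id_a [_ uniq]] := init _ a.
have val_h x : proj1_sig (h x) = x.
  have hom_val u : proj1_sig (h (a u)) = a (fmap _ _ (fun x => proj1_sig (h x)) u).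
    by rewrite hom_h /= -fcomp.
  have hom_id u : a u = a (fmap _ _ (fun x => x) u) by rewrite fid.
  by rewrite (uniq _ hom_val) -(uniq _ hom_id).
by move=> x; rewrite -(val_h x); exact: proj2_sig (h x).
Qed.

Definition compat_seq (X : nat -> Type) (f : forall n, X n.+1 -> X n) : Type :=
  {x : forall n, X n | forall n, f n (x n.+1) = x n}.

Lemma compat_seq_limit (X : nat -> Type) (f : forall n, X n.+1 -> X n) :
  @IsChainLimit X f (compat_seq f) (fun n s => proj1_sig s n).
Proof.
split=> [n [x cx] //|D d cd].
exists (fun y => exist (fun x : forall n, X n => forall n, f n (x n.+1) = x n)
  (fun n => d n y) (fun n => cd n y)); split=> // u hu y.
by apply: eq_sig_hprop => [? ? ?|]; [exact: proof_irrelevance | exact: functional_extensionality_dep].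
Qed.

Section CutOrder.
Variables (F : Type -> Type) (fmap : fmap_t F).
Arguments fmap : clear implicits.
Hypothesis HF : IsFunctor fmap.
Variables (mu : Type) (phi : F mu -> mu) (phiinv : mu -> F mu).
Hypothesis Hmu : IsInitialAlgebra fmap phi.
Hypothesis Hphi1 : forall x, phi (phiinv x) = x.
Hypothesis Hphi2 : forall u, phiinv (phi u) = u.
Variables (nu : Type) (tau : nu -> F nu).
Hypothesis Hnu : IsTerminalCoalgebra fmap tau.
Variable m : mu -> nu.
Hypothesis Hm : forall x, tau (m x) = fmap _ _ m (phiinv x).
Variables (Sig : nat -> Type) (eps : forall X, HSig Sig X -> F X) (p' : Sig 0).
Arguments eps : clear implicits.
Hypothesis Heps : IsPresentation fmap eps.

Let fmap_id A (x : F A) : fmap _ _ (fun a => a) x = x := HF.1 A x.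
Let fmap_comp A B C (f : A -> B) (g : B -> C) x :
  fmap _ _ (fun a => g (f a)) x = fmap _ _ g (fmap _ _ f x) := HF.2 A B C f g x.
Let eps_nat X Y (g : X -> Y) u : eps Y (HSig_map g u) = fmap _ _ g (eps X u) :=
  Heps.1 X Y g u.

Definition leaf X : F X := eps X (existT _ 0 (p', @ord0_elim X)).

Lemma leaf_nat X Y (g : X -> Y) : fmap _ _ g (leaf X) = leaf Y.
Proof.
rewrite /leaf -eps_nat /HSig_map.
by have -> : (fun i : 'I_0 => g (ord0_elim X i)) = ord0_elim Y
  by apply: functional_extensionality => i; case: (ord0_False i).
Qed.

Fixpoint trunc n y : mu :=
  if n is k.+1 then phi (fmap _ _ (trunc k) (tau y)) else phi (leaf mu).

Lemma trunc_Sm n a : trunc n.+1 (m a) = phi (fmap _ _ (fun b => trunc n (m b)) (phiinv a)).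
Proof. by rewrite /= Hm -fmap_comp. Qed.

Lemma trunc_m_trunc j n y : trunc j (m (trunc n y)) = trunc (minn j n) y.
Proof.
elim: j n y => [|j IH] [|n] y //; rewrite trunc_Sm Hphi2.
  by rewrite minn0 leaf_nat.
rewrite minnSS /= -fmap_comp.
by have -> : (fun a => trunc j (m (trunc n a))) = trunc (minn j n)
  by apply: functional_extensionality => a; exact: IH.
Qed.

Lemma trunc_fin a : exists N, trunc N (m a) = a.
Proof.
move: a; apply: initial_ind HF Hmu _ => u.
have [[k [s xs]] <-] := Heps.2 _ u.
pose depth i := proj1_sig (constructive_indefinite_description _ (proj2_sig (xs i))).
have depthP i : trunc (depth i) (m (proj1_sig (xs i))) = proj1_sig (xs i).
  exact: proj2_sig (constructive_indefinite_description _ (proj2_sig (xs i))).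
exists (\max_(i < k) depth i).+1; rewrite -eps_nat trunc_Sm Hphi2 -eps_nat /=.
have -> : (fun i => trunc (\max_(i < k) depth i) (m (proj1_sig (xs i)))) =
          (fun i => proj1_sig (xs i)) => //.
apply: functional_extensionality => i.
by rewrite -{1}(depthP i) trunc_m_trunc (minn_idPr (leq_bigmax i)) depthP.
Qed.

Definition trunc_seq := compat_seq (fun n (a : mu) => trunc n (m a)).

Lemma trunc_compat y n : trunc n (m (trunc n.+1 y)) = trunc n y.
Proof. by rewrite trunc_m_trunc (minn_idPl (leqnSn n)). Qed.

Definition truncs y : trunc_seq :=
  exist (fun a : nat -> mu => forall n, trunc n (m (a n.+1)) = a n) _ (trunc_compat y).

Variable khat : ctree Sig -> nu.
Hypothesis Hk : forall t, tau (khat t) = fmap _ _ khat (eps _ (ctree_out t)).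

Lemma trunc_khat n t : trunc n (khat t) = hmu phi eps (cut p' n t).
Proof.
elim: n t => [|n IH] [k s ts] /=.
  by have -> : (fun i : 'I_0 => hmu phi eps (ord0_elim (ftree Sig) i)) = ord0_elim mu
    by apply: functional_extensionality => i; case: (ord0_False i).
rewrite Hk /= -fmap_comp -eps_nat /HSig_map.
by have -> : (fun i => trunc n (khat (ts i))) = (fun i => hmu phi eps (cut p' n (ts i)))
  by apply: functional_extensionality => i; exact: IH.
Qed.

Definition ftree_out (t : ftree Sig) : HSig Sig (ftree Sig) :=
  match t with fnode n s ts => existT _ n (s, ts) end.

Lemma khat_femb t : khat (femb t) = m (hmu phi eps t).
Proof.
have hom_femb x :
    tau (khat (femb x)) = fmap _ _ (fun x => khat (femb x)) (eps _ (ftree_out x)).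
  by case: x => k s ts; rewrite Hk (fmap_comp (@femb Sig) khat) -(eps_nat (@femb Sig)).
have hom_hmu x :
    tau (m (hmu phi eps x)) = fmap _ _ (fun x => m (hmu phi eps x)) (eps _ (ftree_out x)).
  by case: x => k s ts; rewrite Hm /= Hphi2 (fmap_comp (hmu phi eps) m) -(eps_nat (hmu phi eps)).
exact: terminal_hom_unique Hnu hom_femb hom_hmu t.
Qed.

Definition present (u : F nu) : HSig Sig nu :=
  proj1_sig (constructive_indefinite_description _ (Heps.2 nu u)).

CoFixpoint tree_of (y : nu) : ctree Sig :=
  let: existT n (s, ys) := present (tau y) in cnode s (fun i => tree_of (ys i)).

Lemma khat_tree_of y : khat (tree_of y) = y.
Proof.
have hom_id x : tau x = fmap _ _ (fun x => x) (tau x) by rewrite fmap_id.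
have hom_tree x : tau (khat (tree_of x)) = fmap _ _ (fun x => khat (tree_of x)) (tau x).
  have out : ctree_out (tree_of x) = HSig_map tree_of (present (tau x)).
    by rewrite /=; case: (present (tau x)) => k [s ys].
  rewrite Hk out eps_nat -fmap_comp /present.
  by rewrite (proj2_sig (constructive_indefinite_description _ (Heps.2 nu (tau x)))).
exact: terminal_hom_unique Hnu hom_tree hom_id y.
Qed.

Section ChainLimit.
(** [F] preserves limits of [omega^op]-chains. *)
Hypothesis Hpres : PreservesChainLimits fmap.

(** Since [F] preserves the limit, the sequences carry a coalgebra structure
    whose [n]-th component is the unfolding of the [n+1]-st term. *)
Lemma trunc_seq_coalgebra : exists sig : trunc_seq -> F trunc_seq,
  (forall n s,
     fmap _ _ (fun s : trunc_seq => proj1_sig s n) (sig s) = phiinv (proj1_sig s n.+1)) /\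
  (forall y, sig (truncs y) = fmap _ _ truncs (tau y)).
Proof.
have Flim := Hpres (compat_seq_limit (fun n (a : mu) => trunc n (m a))).
have [_ univ] := Flim.
have cone n (s : trunc_seq) :
    fmap _ _ (fun a => trunc n (m a)) (phiinv (proj1_sig s n.+2)) = phiinv (proj1_sig s n.+1).
  by case: s => a ca; rewrite /= -(ca n.+1) trunc_Sm Hphi2.
have [sig [sig_proj _]] := univ _ _ cone; exists sig; split=> //.
apply: (chain_limit_ext Flim) => n y.
by rewrite sig_proj -!fmap_comp /= Hphi2.
Qed.

Lemma trunc_seq_realize : exists g : trunc_seq -> nu,
  (forall n s, trunc n (g s) = proj1_sig s n) /\ (forall y, g (truncs y) = y).
Proof.
have [sig [sig_proj sig_truncs]] := trunc_seq_coalgebra.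
have [g [hom_g _]] := Hnu sig.
have trunc_g n s : trunc n (g s) = proj1_sig s n.
  elim: n s => [|n IH] [a ca] /=; first by rewrite -(ca 0).
  rewrite hom_g -fmap_comp.
  have -> : (fun s => trunc n (g s)) = (fun s : trunc_seq => proj1_sig s n)
    by apply: functional_extensionality => s; exact: IH.
  by rewrite sig_proj Hphi1.
exists g; split=> //.
have hom_g_truncs y : tau (g (truncs y)) = fmap _ _ (fun y => g (truncs y)) (tau y).
  by rewrite hom_g sig_truncs -fmap_comp.
have hom_id y : tau y = fmap _ _ (fun y => y) (tau y) by rewrite fmap_id.
exact: terminal_hom_unique Hnu hom_g_truncs hom_id.
Qed.

Lemma trunc_sep y y' : (forall n, trunc n y = trunc n y') -> y = y'.
Proof.
move=> agree; have [g [_ g_truncs]] := trunc_seq_realize.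
rewrite -(g_truncs y) -(g_truncs y'); congr g.
by apply: eq_sig_hprop => [? ? ?|]; [exact: proof_irrelevance | exact: functional_extensionality].
Qed.

Lemma trunc_lim (a : nat -> mu) : (forall n, trunc n (m (a n.+1)) = a n) ->
  exists y, forall n, trunc n y = a n.
Proof.
move=> ca; have [g [trunc_g _]] := trunc_seq_realize.
by exists (g (exist _ a ca)) => n; rewrite trunc_g.
Qed.

Lemma cut_le_trunc_le : cut_le phi eps p' khat = trunc_le m trunc.
Proof.
apply: functional_extensionality => x; apply: functional_extensionality => y.
apply: propositional_extensionality; split.
  case=> [->|[s [s' [n [-> [-> sim]]]]]]; first exact: trunc_le_refl.
  right; exists n; rewrite /approx trunc_khat -khat_femb.
  by apply: trunc_sep => k; rewrite !trunc_khat.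
case=> [->|[n ->]]; first by left.
right; exists (femb (cut p' n (tree_of y))), (tree_of y), n.
by rewrite /approx khat_femb -trunc_khat khat_tree_of.
Qed.

End ChainLimit.
End CutOrder.

Theorem corollary4p16
  (F : Type -> Type) (fmap : fmap_t F)
  (HF : IsFunctor fmap) (Hbic : Bicontinuous fmap)
  (Hne : inhabited (F Empty_set))
  (mu : Type) (phi : F mu -> mu) (Hmu : IsInitialAlgebra fmap phi)
  (phiinv : mu -> F mu)
  (Hphi1 : forall x, phi (phiinv x) = x) (Hphi2 : forall u, phiinv (phi u) = u)
  (nu : Type) (tau : nu -> F nu) (Hnu : IsTerminalCoalgebra fmap tau)
  (tauinv : F nu -> nu)
  (Htau1 : forall x, tauinv (tau x) = x) (Htau2 : forall u, tau (tauinv u) = u)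
  (m : mu -> nu) (Hm : forall x, tau (m x) = fmap _ _ m (phiinv x))
  (Sig : nat -> Type) (eps : forall X, HSig Sig X -> F X)
  (Heps : IsPresentation fmap eps)
  (p' : Sig 0)
  (khat : ctree Sig -> nu)
  (Hk : forall t, tau (khat t) = fmap _ _ khat (eps _ (ctree_out t))) :
  let le_nu := cut_le phi eps p' khat in
  let le_mu := fun x y => le_nu (m x) (m y) in
  let le_Fnu := fun u v => le_nu (tauinv u) (tauinv v) in
  ConservativeCompletion le_mu le_nu m /\
  (Continuous le_nu le_Fnu tau /\
   (forall x, tau (m x) = fmap _ _ m (phiinv x)) /\
   (forall g : nu -> F nu, Continuous le_nu le_Fnu g ->
      (forall x, g (m x) = fmap _ _ m (phiinv x)) -> forall y, g y = tau y)).
Proof.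
have Hpres := proj2 Hbic.
pose T := trunc fmap phi tau eps p'.
have trunc0 y y' : T 0 y = T 0 y' by [].
have trunc_comp := trunc_m_trunc HF Hphi2 Hm p' Heps.
have sep := trunc_sep HF Hphi1 Hphi2 Hnu Hm (p' := p') Heps Hpres.
have lim := trunc_lim HF Hphi1 Hphi2 Hnu Hm (p' := p') Heps Hpres.
have fin := trunc_fin HF Hmu Hphi2 Hm p' Heps.
rewrite /= (cut_le_trunc_le HF Hphi1 Hphi2 Hnu Hm p' Heps Hk Hpres).
split; first exact: trunc_completion trunc0 trunc_comp sep lim fin.
have tau_cont := iso_continuous (trunc_le m T) Htau1.
split=> //; split=> // g cont_g g_m.
apply: (continuous_ext_unique trunc0 trunc_comp sep lim _ cont_g tau_cont) => [u v le_uv le_vu|a].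
  by rewrite -(Htau2 u) -(Htau2 v) (trunc_le_antisym trunc_comp sep le_uv le_vu).
by rewrite g_m Hm.
Qed.
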